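(* Let $\mathcal C$ be a hyper-extensive category and $H\colon\mathcal C\to\mathcal C$ a functor preserving countable coproducts and having a terminal coalgebra. Then $H$ is a cia functor: every corecursive $H$-algebra is a cia. Hence the category of corecursive $H$-algebras coincides with the category of cias for $H$ (both as full subcategories of the category of $H$-algebras).
   Context: Hyper-extensive category: countable coproducts that are universal (pullbacks along arbitrary morphisms exist and preserve them), disjoint (injections monic, pairwise pullbacks initial), and coherent (a countable family of pairwise disjoint coproduct injections into $A$ has copairing a coproduct injection). An $H$-algebra $a\colon HA\to A$ is corecursive if for every coalgebra $e\colon X\to HX$ there is a unique $s\colon X\to A$ with $s=a\cdot Hs\cdot e$. It is a cia if for every $e\colon X\to HX+A$ there is a unique $s\colon X\to A$ with $s=[a,\mathrm{id}_A]\cdot(Hs+\mathrm{id}_A)\cdot e$. A functor is a cia functor if every corecursive algebra for it is a cia. *)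

Record Category := {
  Obj :> Type;
  Hom : Obj -> Obj -> Type;
  idm : forall A : Obj, Hom A A;
  comp : forall {A B C : Obj}, Hom B C -> Hom A B -> Hom A C;
  comp_assoc : forall (A B C D : Obj) (h : Hom C D) (g : Hom B C) (f : Hom A B),
      comp h (comp g f) = comp (comp h g) f;
  comp_id_l : forall (A B : Obj) (f : Hom A B), comp (idm B) f = f;
  comp_id_r : forall (A B : Obj) (f : Hom A B), comp f (idm A) = f
}.

Arguments Hom {C} : rename.
Arguments idm {C} : rename.
Arguments comp {C} {A B C0} : rename.

Record Functor (C : Category) := {
  Fobj :> C -> C;
  Fmor : forall {A B : C}, Hom A B -> Hom (Fobj A) (Fobj B);
  Fmor_id : forall A : C, Fmor (idm A) = idm (Fobj A);
  Fmor_comp : forall (A B D : C) (g : Hom B D) (f : Hom A B),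
      Fmor (comp g f) = comp (Fmor g) (Fmor f)
}.

Arguments Fobj {C}.
Arguments Fmor {C} f {A B} : rename.

Section CatDefs.
Variable C : Category.

Definition countable (I : Type) : Prop :=
  exists f : I -> nat, forall i j, f i = f j -> i = j.

Definition is_initial (O : C) : Prop :=
  forall X : C, exists! h : Hom O X, True.

Definition monic {A B : C} (m : Hom A B) : Prop :=
  forall (X : C) (f g : Hom X A), comp m f = comp m g -> f = g.

Definition is_coproduct {I : Type} (A : I -> C) (S : C)
    (inj : forall i, Hom (A i) S) : Prop :=
  forall (X : C) (f : forall i, Hom (A i) X),
    exists! h : Hom S X, forall i, comp h (inj i) = f i.

Definition is_bincoproduct (B1 B2 S : C) (m1 : Hom B1 S) (m2 : Hom B2 S) : Prop :=
  forall (X : C) (f1 : Hom B1 X) (f2 : Hom B2 X),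
    exists! h : Hom S X, comp h m1 = f1 /\ comp h m2 = f2.

Definition is_pullback {X Y Z : C} (f : Hom X Z) (g : Hom Y Z)
    (P : C) (p1 : Hom P X) (p2 : Hom P Y) : Prop :=
  comp f p1 = comp g p2 /\
  forall (Q : C) (q1 : Hom Q X) (q2 : Hom Q Y), comp f q1 = comp g q2 ->
    exists! u : Hom Q P, comp p1 u = q1 /\ comp p2 u = q2.

Definition coproduct_injection {B A : C} (m : Hom B A) : Prop :=
  exists (B' : C) (m' : Hom B' A), is_bincoproduct B B' A m m'.

Definition disjoint_maps {B1 B2 A : C} (m1 : Hom B1 A) (m2 : Hom B2 A) : Prop :=
  exists (P : C) (p1 : Hom P B1) (p2 : Hom P B2),
    is_pullback m1 m2 P p1 p2 /\ is_initial P.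

Definition has_countable_coproducts : Prop :=
  forall (I : Type), countable I -> forall A : I -> C,
    exists (S : C) (inj : forall i, Hom (A i) S), is_coproduct A S inj.

Definition universal_coproducts : Prop :=
  forall (I : Type), countable I -> forall (A : I -> C) (S : C)
    (inj : forall i, Hom (A i) S), is_coproduct A S inj ->
  forall (D : C) (g : Hom D S),
    (forall i, exists (P : C) (r : Hom P (A i)) (q : Hom P D),
        is_pullback (inj i) g P r q) /\
    (forall (P : I -> C) (r : forall i, Hom (P i) (A i)) (q : forall i, Hom (P i) D),
        (forall i, is_pullback (inj i) g (P i) (r i) (q i)) ->
        is_coproduct P D q).

Definition disjoint_coproducts : Prop :=
  forall (I : Type), countable I -> forall (A : I -> C) (S : C)
    (inj : forall i, Hom (A i) S), is_coproduct A S inj ->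
    (forall i, monic (inj i)) /\
    (forall i j, i <> j -> disjoint_maps (inj i) (inj j)).

Definition coherent_coproducts : Prop :=
  forall (I : Type), countable I -> forall (B : I -> C) (A : C)
    (m : forall i, Hom (B i) A),
    (forall i, coproduct_injection (m i)) ->
    (forall i j, i <> j -> disjoint_maps (m i) (m j)) ->
    forall (S : C) (sigma : forall i, Hom (B i) S), is_coproduct B S sigma ->
    forall h : Hom S A, (forall i, comp h (sigma i) = m i) ->
      coproduct_injection h.

Definition hyper_extensive : Prop :=
  has_countable_coproducts /\ universal_coproducts /\
  disjoint_coproducts /\ coherent_coproducts.

Variable H : Functor C.

Definition preserves_countable_coproducts : Prop :=
  forall (I : Type), countable I -> forall (A : I -> C) (S : C)
    (inj : forall i, Hom (A i) S), is_coproduct A S inj ->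
    is_coproduct (fun i => H (A i)) (H S) (fun i => Fmor H (inj i)).

Definition is_terminal_coalgebra (T : C) (t : Hom T (H T)) : Prop :=
  forall (X : C) (e : Hom X (H X)),
    exists! s : Hom X T, comp t s = comp (Fmor H s) e.

Definition has_terminal_coalgebra : Prop :=
  exists (T : C) (t : Hom T (H T)), is_terminal_coalgebra T t.

Definition corecursive {A : C} (a : Hom (H A) A) : Prop :=
  forall (X : C) (e : Hom X (H X)),
    exists! s : Hom X A, s = comp a (comp (Fmor H s) e).

(* completely iterative algebra: for every binary coproduct HX + A (with
   injections in1, in2) and every e : X -> HX + A there is a unique s with
   s = [a, id] . (Hs + id) . e ; here k = [a, id] . (Hs + id) is the unique
   map with k . in1 = a . Hs and k . in2 = id. *)
Definition cia {A : C} (a : Hom (H A) A) : Prop :=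
  forall (X S : C) (in1 : Hom (H X) S) (in2 : Hom A S),
    is_bincoproduct (H X) A S in1 in2 ->
  forall e : Hom X S,
    exists! s : Hom X A,
      exists k : Hom S A,
        comp k in1 = comp a (Fmor H s) /\ comp k in2 = idm A /\ s = comp k e.

Definition cia_functor : Prop :=
  forall (A : C) (a : Hom (H A) A), corecursive a -> cia a.

End CatDefs.

Arguments corecursive {C} H {A}.
Arguments cia {C} H {A}.

From Stdlib Require Import IndefiniteDescription.

(* Given [e : X -> H X + A], split [X] into levels: [W_0 = e^-1(A)], and [W_(n+1)]
   the part of [X] that [e] sends into [H W_n].  Disjointness and universality make
   the [W_n] pairwise disjoint summands of [X], so by coherence their coproduct is a
   summand with some complement [X_inf].  Since [H] preserves the coproduct
   [X = (sum W_n) + X_inf] and [X_inf] meets no [W_n], [e] maps [X_inf] into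
   [H X_inf].  A solution of [e] is then forced on each [W_n] by recursion on [n],
   and on [X_inf] it is the solution of the coalgebra [X_inf -> H X_inf] given by
   corecursivity of [a]. *)

Section Coproducts.
Variable C : Category.
Local Notation "g ∘ f" := (comp g f) (at level 40, left associativity).

Lemma initial_hom_unique (O : C) : is_initial C O -> forall X (f g : Hom O X), f = g.
Proof.
  intros HO X f g. destruct (HO X) as [h [_ Hh]].
  transitivity h; [symmetry|]; apply Hh; exact I.
Qed.

Lemma coproduct_hom_ext {I} (A : I -> C) S inj : is_coproduct C A S inj ->
  forall X (h1 h2 : Hom S X), (forall i, h1 ∘ inj i = h2 ∘ inj i) -> h1 = h2.
Proof.
  intros Hc X h1 h2 E. destruct (Hc X (fun i => h2 ∘ inj i)) as [h [_ Hu]].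
  transitivity h; [symmetry|]; apply Hu; auto.
Qed.

Lemma bincoproduct_hom_ext B1 B2 S (m1 : Hom B1 S) (m2 : Hom B2 S) :
  is_bincoproduct C B1 B2 S m1 m2 ->
  forall X (h1 h2 : Hom S X), h1 ∘ m1 = h2 ∘ m1 -> h1 ∘ m2 = h2 ∘ m2 -> h1 = h2.
Proof.
  intros Hc X h1 h2 E1 E2. destruct (Hc X (h2 ∘ m1) (h2 ∘ m2)) as [h [_ Hu]].
  transitivity h; [symmetry|]; apply Hu; auto.
Qed.

Lemma bincoproduct_sym B1 B2 S (m1 : Hom B1 S) (m2 : Hom B2 S) :
  is_bincoproduct C B1 B2 S m1 m2 -> is_bincoproduct C B2 B1 S m2 m1.
Proof.
  intros Hc X f1 f2. destruct (Hc X f2 f1) as [h [[E1 E2] Hu]].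
  exists h. split; [tauto|]. intros h' [E1' E2']. apply Hu; tauto.
Qed.

Definition bool_family (B1 B2 : C) (b : bool) : C := if b then B1 else B2.

Definition bool_inj {B1 B2 S : C} (m1 : Hom B1 S) (m2 : Hom B2 S) :
  forall b, Hom (bool_family B1 B2 b) S :=
  fun b => match b with true => m1 | false => m2 end.

Lemma bincoproduct_bool_coproduct B1 B2 S (m1 : Hom B1 S) (m2 : Hom B2 S) :
  is_bincoproduct C B1 B2 S m1 m2 ->
  is_coproduct C (bool_family B1 B2) S (bool_inj m1 m2).
Proof.
  intros Hc X f. destruct (Hc X (f true) (f false)) as [h [[E1 E2] Hu]].
  exists h. split.
  - intros [|]; assumption.
  - intros h' E. apply Hu. exact (conj (E true) (E false)).
Qed.

Lemma bool_coproduct_bincoproduct (F : bool -> C) S (inj : forall b, Hom (F b) S) :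
  is_coproduct C F S inj -> is_bincoproduct C (F true) (F false) S (inj true) (inj false).
Proof.
  intros Hc X f1 f2.
  destruct (Hc X (fun b => match b return Hom (F b) X with true => f1 | false => f2 end))
    as [h [E Hu]].
  exists h. split.
  - exact (conj (E true) (E false)).
  - intros h' [E1 E2]. apply Hu. intros [|]; assumption.
Qed.

Lemma countable_bool : countable bool.
Proof. exists (fun b : bool => if b then 0 else 1). intros [|] [|]; simpl; congruence. Qed.

Lemma countable_nat : countable nat.
Proof. exists (fun n => n). auto. Qed.

Lemma countable_Empty_set : countable Empty_set.
Proof. exists (fun i : Empty_set => match i with end). intros []. Qed.

Lemma coproduct_of_initial {J} (P : J -> C) D q :
  is_coproduct C P D q -> (forall i, is_initial C (P i)) -> is_initial C D.
Proof.
  intros Hc HI X.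
  destruct (Hc X (fun i => proj1_sig (constructive_indefinite_description _ (HI i X))))
    as [h _].
  exists h. split; [exact I|]. intros h' _.
  apply (coproduct_hom_ext _ _ _ Hc). intros i. apply (initial_hom_unique _ (HI i)).
Qed.

Lemma inr_split_of_initial_inl P1 P2 D (q1 : Hom P1 D) (q2 : Hom P2 D) :
  is_bincoproduct C P1 P2 D q1 q2 -> is_initial C P1 -> exists u : Hom D P2, q2 ∘ u = idm D.
Proof.
  intros Hb HI. destruct (HI P2) as [z _].
  destruct (Hb P2 z (idm P2)) as [u [[_ E2] _]]. exists u.
  apply (bincoproduct_hom_ext _ _ _ _ _ Hb).
  - apply (initial_hom_unique _ HI).
  - rewrite <- comp_assoc, E2, comp_id_l, comp_id_r. reflexivity.
Qed.

Lemma preserves_bincoproduct (H : Functor C) :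
  preserves_countable_coproducts C H ->
  forall B1 B2 S (m1 : Hom B1 S) (m2 : Hom B2 S), is_bincoproduct C B1 B2 S m1 m2 ->
  is_bincoproduct C (H B1) (H B2) (H S) (Fmor H m1) (Fmor H m2).
Proof.
  intros HP B1 B2 S m1 m2 Hb.
  exact (bool_coproduct_bincoproduct _ _ _
           (HP bool countable_bool _ _ _ (bincoproduct_bool_coproduct _ _ _ _ _ Hb))).
Qed.

Section CountableCoproducts.
Hypothesis HCC : has_countable_coproducts C.

Lemma bincoproduct_exists (B1 B2 : C) : exists S m1 m2, is_bincoproduct C B1 B2 S m1 m2.
Proof.
  destruct (HCC bool countable_bool (bool_family B1 B2)) as [S [inj Hc]].
  exists S, (inj true), (inj false). exact (bool_coproduct_bincoproduct _ _ _ Hc).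
Qed.

(* The complement of [m ∘ n] is the coproduct of the two complements. *)
Lemma bincoproduct_inl_comp B B' S (m : Hom B S) (m' : Hom B' S)
  D D' (n : Hom D B) (n' : Hom D' B) :
  is_bincoproduct C B B' S m m' -> is_bincoproduct C D D' B n n' ->
  exists Q c, is_bincoproduct C D Q S (m ∘ n) c.
Proof.
  intros Hb1 Hb2. destruct (bincoproduct_exists D' B') as [Q [k1 [k2 Hk]]].
  destruct (Hk S (m ∘ n') m') as [c [[Ec1 Ec2] _]].
  exists Q, c. intros X f1 f2.
  destruct (Hb2 X f1 (f2 ∘ k1)) as [g [[Eg1 Eg2] Hgu]].
  destruct (Hb1 X g (f2 ∘ k2)) as [h [[Eh1 Eh2] Hhu]].
  exists h. split; [split|].
  - rewrite comp_assoc, Eh1. exact Eg1.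
  - apply (bincoproduct_hom_ext _ _ _ _ _ Hk).
    + rewrite <- comp_assoc, Ec1, comp_assoc, Eh1. exact Eg2.
    + rewrite <- comp_assoc, Ec2. exact Eh2.
  - intros h' [E1 E2]. apply Hhu. split.
    + symmetry. apply Hgu. split.
      * rewrite <- comp_assoc. exact E1.
      * rewrite <- comp_assoc, <- Ec1, comp_assoc, E2. reflexivity.
    + rewrite <- Ec2, comp_assoc, E2. reflexivity.
Qed.

End CountableCoproducts.

Section UniversalCoproducts.
Hypothesis HU : universal_coproducts C.

(* Pull back the empty coproduct along [g]. *)
Lemma initial_strict D S (g : Hom D S) : is_initial C S -> is_initial C D.
Proof.
  intros HS.
  set (E := fun i : Empty_set => match i return C with end).
  assert (Hc : is_coproduct C E S (fun i => match i with end)).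
  { intros X f. destruct (HS X) as [h [_ Hu]]. exists h. split; [intros []|].
    intros h' _. apply Hu. exact I. }
  destruct (HU Empty_set countable_Empty_set E S _ Hc D g) as [_ Hpb].
  assert (Hd := Hpb E (fun i => match i with end) (fun i => match i with end)
                    (fun i => match i with end)).
  intros X. destruct (Hd X (fun i => match i with end)) as [h [_ Hu]].
  exists h. split; [exact I|]. intros h' _. apply Hu. intros [].
Qed.

Lemma bincoproduct_pullback B1 B2 S (m1 : Hom B1 S) (m2 : Hom B2 S) :
  is_bincoproduct C B1 B2 S m1 m2 ->
  forall D (g : Hom D S), exists P1 P2 (r1 : Hom P1 B1) (r2 : Hom P2 B2) q1 q2,
    is_pullback C m1 g P1 r1 q1 /\ is_pullback C m2 g P2 r2 q2 /\
    is_bincoproduct C P1 P2 D q1 q2.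
Proof.
  intros Hb D g.
  destruct (HU bool countable_bool _ _ _ (bincoproduct_bool_coproduct _ _ _ _ _ Hb) D g)
    as [Hex Hcop].
  destruct (Hex true) as [P1 [r1 [q1 Hp1]]]. destruct (Hex false) as [P2 [r2 [q2 Hp2]]].
  exists P1, P2, r1, r2, q1, q2. split; [exact Hp1|]. split; [exact Hp2|].
  apply (bool_coproduct_bincoproduct (bool_family P1 P2) _ (bool_inj q1 q2)).
  apply (Hcop _ (fun b => match b return Hom (bool_family P1 P2 b) (bool_family B1 B2 b)
                          with true => r1 | false => r2 end)).
  intros [|]; assumption.
Qed.

Lemma coproduct_pullback {I} (HI : countable I) (A : I -> C) S inj :
  is_coproduct C A S inj -> forall D (g : Hom D S),
  exists (P : I -> C) (r : forall i, Hom (P i) (A i)) (q : forall i, Hom (P i) D),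
    (forall i, is_pullback C (inj i) g (P i) (r i) (q i)) /\ is_coproduct C P D q.
Proof.
  intros Hc D g. destruct (HU I HI A S inj Hc D g) as [Hex Hcop].
  assert (Hpb : forall i, exists t : {P : C & (Hom P (A i) * Hom P D)%type},
     is_pullback C (inj i) g (projT1 t) (fst (projT2 t)) (snd (projT2 t))).
  { intros i. destruct (Hex i) as [P [r [q Hp]]]. exists (existT _ P (r, q)). exact Hp. }
  set (t := fun i => proj1_sig (constructive_indefinite_description _ (Hpb i))).
  exists (fun i => projT1 (t i)), (fun i => fst (projT2 (t i))), (fun i => snd (projT2 (t i))).
  assert (Ht : forall i, is_pullback C (inj i) g (projT1 (t i)) (fst (projT2 (t i)))
                                     (snd (projT2 (t i)))).
  { intros i. exact (proj2_sig (constructive_indefinite_description _ (Hpb i))). }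
  split; [exact Ht|]. exact (Hcop _ _ _ Ht).
Qed.

Hypothesis HD : disjoint_coproducts C.

Lemma bincoproduct_inl_monic B1 B2 S (m1 : Hom B1 S) (m2 : Hom B2 S) :
  is_bincoproduct C B1 B2 S m1 m2 -> monic C m1.
Proof.
  intros Hb.
  exact (proj1 (HD bool countable_bool _ _ _ (bincoproduct_bool_coproduct _ _ _ _ _ Hb)) true).
Qed.

Lemma bincoproduct_disjoint B1 B2 S (m1 : Hom B1 S) (m2 : Hom B2 S) :
  is_bincoproduct C B1 B2 S m1 m2 ->
  forall Q (f : Hom Q B1) (g : Hom Q B2), m1 ∘ f = m2 ∘ g -> is_initial C Q.
Proof.
  intros Hb Q f g E.
  destruct (proj2 (HD bool countable_bool _ _ _ (bincoproduct_bool_coproduct _ _ _ _ _ Hb))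
              true false ltac:(discriminate)) as [P [p1 [p2 [[_ Hpb] HP]]]].
  destruct (Hpb Q f g E) as [u _]. exact (initial_strict _ _ u HP).
Qed.

Lemma factor_through_complement W Wc X (w : Hom W X) (c : Hom Wc X) :
  is_bincoproduct C W Wc X w c ->
  forall B (m : Hom B X),
    (forall Q (f : Hom Q B) (g : Hom Q W), m ∘ f = w ∘ g -> is_initial C Q) ->
  exists t, m = c ∘ t.
Proof.
  intros Hb B m Hd.
  destruct (bincoproduct_pullback _ _ _ _ _ Hb B m)
    as [P1 [P2 [r1 [r2 [q1 [q2 [[E1 _] [[E2 _] Hb2]]]]]]]].
  assert (HI : is_initial C P1) by (apply (Hd _ q1 r1); symmetry; exact E1).
  destruct (inr_split_of_initial_inl _ _ _ _ _ Hb2 HI) as [u Hu].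
  exists (r2 ∘ u). rewrite comp_assoc, E2, <- comp_assoc, Hu, comp_id_r. reflexivity.
Qed.

End UniversalCoproducts.

End Coproducts.

Section CiaOfCorecursive.
Variable C : Category.
Local Notation "g ∘ f" := (comp g f) (at level 40, left associativity).
Variable H : Functor C.
Hypothesis HCC : has_countable_coproducts C.
Hypothesis HU : universal_coproducts C.
Hypothesis HD : disjoint_coproducts C.
Hypothesis HK : coherent_coproducts C.
Hypothesis HP : preserves_countable_coproducts C H.
Variables (A : C) (a : Hom (H A) A).
Variables (X HXA : C) (in1 : Hom (H X) HXA) (in2 : Hom A HXA).
Hypothesis Hbin : is_bincoproduct C (H X) A HXA in1 in2.
Variable e : Hom X HXA.

(* Splitting [X] along [e] as [XH + W0] with [e = fH + e0]. *)
Variables (XH W0 : C) (fH : Hom XH (H X)) (e0 : Hom W0 A) (xH : Hom XH X) (w0 : Hom W0 X).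
Hypothesis pbH : is_pullback C in1 e XH fH xH.
Hypothesis pb0 : is_pullback C in2 e W0 e0 w0.
Hypothesis binX : is_bincoproduct C XH W0 X xH w0.

Record summand := {
  sub : C; sub_inj : Hom sub X;
  compl : C; compl_inj : Hom compl X;
  sub_bincoproduct : is_bincoproduct C sub compl X sub_inj compl_inj }.

Definition next_level (W W' : summand) (u : Hom (sub W') (H (sub W))) : Prop :=
  e ∘ sub_inj W' = in1 ∘ (Fmor H (sub_inj W) ∘ u) /\
  (forall Q (f : Hom Q X) (g : Hom Q (H (sub W))),
     e ∘ f = in1 ∘ (Fmor H (sub_inj W) ∘ g) -> exists v, sub_inj W' ∘ v = f).

Lemma next_level_exists (W : summand) :
  exists t : {W' : summand & Hom (sub W') (H (sub W))}, next_level W (projT1 t) (projT2 t).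
Proof.
  assert (HbW := preserves_bincoproduct C H HP _ _ _ _ _ (sub_bincoproduct W)).
  destruct (bincoproduct_pullback C HU _ _ _ _ _ HbW XH fH)
    as [V [V' [rV [rV' [qV [qV' [[EV HVu] [_ HbV]]]]]]]].
  destruct (bincoproduct_inl_comp C HCC _ _ _ _ _ _ _ _ _ binX HbV) as [Q [c Hc]].
  exists (existT _ {| sub := V; sub_inj := xH ∘ qV; compl := Q; compl_inj := c;
                      sub_bincoproduct := Hc |} rV).
  unfold next_level; cbn [projT1 projT2 sub_inj sub]. destruct pbH as [EH HHu]. split.
  - rewrite (comp_assoc _ _ _ _ _ e), <- EH, <- comp_assoc, <- EV. reflexivity.
  - intros Q0 f g Efg.
    destruct (HHu Q0 (Fmor H (sub_inj W) ∘ g) f (eq_sym Efg)) as [u1 [[Eu1 Eu2] _]].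
    destruct (HVu Q0 g u1 (eq_sym Eu1)) as [u2 [[_ Ev2] _]].
    exists u2. rewrite <- comp_assoc, Ev2. exact Eu2.
Qed.

Definition next (W : summand) := constructive_indefinite_description _ (next_level_exists W).

(* [level n] consists of the points of [X] that [e] sends into [A] after exactly [n]
   unfoldings. *)
Fixpoint level (n : nat) : summand :=
  match n with
  | 0 => {| sub := W0; sub_inj := w0; compl := XH; compl_inj := xH;
            sub_bincoproduct := bincoproduct_sym C _ _ _ _ _ binX |}
  | S n => projT1 (proj1_sig (next (level n)))
  end.

Definition level_unfold (n : nat) : Hom (sub (level (S n))) (H (sub (level n))) :=
  projT2 (proj1_sig (next (level n))).

Lemma level_unfold_next n : next_level (level n) (level (S n)) (level_unfold n).
Proof. exact (proj2_sig (next (level n))). Qed.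

Fixpoint level_solution (n : nat) : Hom (sub (level n)) A :=
  match n return Hom (sub (level n)) A with
  | 0 => e0
  | S n => a ∘ (Fmor H (level_solution n) ∘ level_unfold n)
  end.

Lemma levels_disjoint m k : m <> k ->
  forall Q (f : Hom Q (sub (level m))) (g : Hom Q (sub (level k))),
    sub_inj (level m) ∘ f = sub_inj (level k) ∘ g -> is_initial C Q.
Proof.
  revert k. induction m as [|m IH]; intros [|k] Hmk Q f g E.
  - contradiction.
  - destruct (level_unfold_next k) as [Ek _]. destruct pb0 as [E0 _].
    apply (bincoproduct_disjoint C HU HD _ _ _ _ _ Hbin Q
             (Fmor H (sub_inj (level k)) ∘ (level_unfold k ∘ g)) (e0 ∘ f)).
    rewrite !comp_assoc in Ek. rewrite !comp_assoc, <- Ek, E0, <- !comp_assoc.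
    f_equal. symmetry. exact E.
  - destruct (level_unfold_next m) as [Em _]. destruct pb0 as [E0 _].
    apply (bincoproduct_disjoint C HU HD _ _ _ _ _ Hbin Q
             (Fmor H (sub_inj (level m)) ∘ (level_unfold m ∘ f)) (e0 ∘ g)).
    rewrite !comp_assoc in Em. rewrite !comp_assoc, <- Em, E0, <- !comp_assoc.
    f_equal. exact E.
  - destruct (level_unfold_next k) as [Ek _]. destruct (level_unfold_next m) as [Em _].
    (* [in1] is monic, so [f] and [g] meet already in [H X]; there, [H (level k)] and
       its complement are disjoint because [H] preserves the coproduct. *)
    assert (EH : Fmor H (sub_inj (level m)) ∘ (level_unfold m ∘ f)
                 = Fmor H (sub_inj (level k)) ∘ (level_unfold k ∘ g)).
    { apply (bincoproduct_inl_monic C HD _ _ _ _ _ Hbin).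
      rewrite !comp_assoc in Ek, Em. rewrite !comp_assoc, <- Ek, <- Em, <- !comp_assoc, E.
      reflexivity. }
    destruct (factor_through_complement C HU _ _ _ _ _ (sub_bincoproduct (level k)) _
                (sub_inj (level m)) (IH k ltac:(congruence))) as [t Et].
    apply (bincoproduct_disjoint C HU HD _ _ _ _ _
             (preserves_bincoproduct C H HP _ _ _ _ _ (sub_bincoproduct (level k))) Q
             (level_unfold k ∘ g) (Fmor H t ∘ (level_unfold m ∘ f))).
    rewrite <- EH, Et, Fmor_comp, <- comp_assoc. reflexivity.
Qed.

Lemma solution_step_level0 (k : Hom HXA A) :
  k ∘ in2 = idm A -> (k ∘ e) ∘ sub_inj (level 0) = level_solution 0.
Proof.
  intros Ek. destruct pb0 as [E0 _]. simpl.
  rewrite <- comp_assoc, <- E0, comp_assoc, Ek, comp_id_l. reflexivity.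
Qed.

Lemma solution_step_level_succ (k : Hom HXA A) (s : Hom X A) n :
  k ∘ in1 = a ∘ Fmor H s -> s ∘ sub_inj (level n) = level_solution n ->
  (k ∘ e) ∘ sub_inj (level (S n)) = level_solution (S n).
Proof.
  intros Ek Es. destruct (level_unfold_next n) as [En _].
  change (level_solution (S n)) with (a ∘ (Fmor H (level_solution n) ∘ level_unfold n)).
  rewrite <- comp_assoc, En, comp_assoc, Ek, <- !comp_assoc,
    (comp_assoc _ _ _ _ _ (Fmor H s)), <- Fmor_comp, Es.
  reflexivity.
Qed.

Lemma cia_solution_on_levels (s : Hom X A) (k : Hom HXA A) :
  k ∘ in1 = a ∘ Fmor H s -> k ∘ in2 = idm A -> s = k ∘ e ->
  forall n, s ∘ sub_inj (level n) = level_solution n.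
Proof.
  intros Ek1 Ek2 Es n. induction n as [|n IH]; rewrite Es at 1.
  - exact (solution_step_level0 k Ek2).
  - exact (solution_step_level_succ k s n Ek1 IH).
Qed.

Section Remainder.
Variables (SW : C) (sig : forall n, Hom (sub (level n)) SW).
Hypothesis Hsig : is_coproduct C (fun n => sub (level n)) SW sig.
Variables (h : Hom SW X) (Xi : C) (xi : Hom Xi X).
Hypothesis Eh : forall n, h ∘ sig n = sub_inj (level n).
Hypothesis HbXi : is_bincoproduct C SW Xi X h xi.

Lemma remainder_disjoint_level n Q (f : Hom Q Xi) (g : Hom Q (sub (level n))) :
  xi ∘ f = sub_inj (level n) ∘ g -> is_initial C Q.
Proof.
  intros E. apply (bincoproduct_disjoint C HU HD _ _ _ _ _ HbXi Q (sig n ∘ g) f).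
  rewrite comp_assoc, Eh. symmetry. exact E.
Qed.

Lemma remainder_into_HX : exists f : Hom Xi (H X), e ∘ xi = in1 ∘ f.
Proof.
  destruct (bincoproduct_pullback C HU _ _ _ _ _ Hbin Xi (e ∘ xi))
    as [P1 [P2 [r1 [r2 [q1 [q2 [[Ep1 _] [[Ep2 _] HbP]]]]]]]].
  assert (HI2 : is_initial C P2).
  { destruct pb0 as [_ U0]. destruct (U0 P2 r2 (xi ∘ q2)) as [u [[_ Eu] _]].
    { rewrite Ep2, comp_assoc. reflexivity. }
    apply (remainder_disjoint_level 0 P2 q2 u). symmetry. exact Eu. }
  destruct (inr_split_of_initial_inl C _ _ _ _ _ (bincoproduct_sym C _ _ _ _ _ HbP) HI2)
    as [u Eu].
  exists (r1 ∘ u). rewrite comp_assoc, Ep1, <- comp_assoc, Eu, comp_id_r. reflexivity.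
Qed.

(* No point of the remainder reaches [level n] after one step, so [e] restricts to a
   coalgebra on it. *)
Lemma remainder_coalgebra : exists u : Hom Xi (H Xi), e ∘ xi = in1 ∘ (Fmor H xi ∘ u).
Proof.
  destruct remainder_into_HX as [f Ef].
  destruct (bincoproduct_pullback C HU _ _ _ _ _
              (preserves_bincoproduct C H HP _ _ _ _ _ HbXi) Xi f)
    as [R1 [R2 [rho1 [rho2 [p1 [p2 [[Er1 _] [[Er2 _] HbR]]]]]]]].
  assert (HR1 : is_initial C R1).
  { destruct (coproduct_pullback C HU countable_nat _ _ _
                (HP nat countable_nat _ _ _ Hsig) R1 rho1) as [T [t [p [Hpb HcT]]]].
    apply (coproduct_of_initial C _ _ _ HcT). intros n.
    destruct (proj2 (level_unfold_next n) (T n) (xi ∘ (p1 ∘ p n)) (t n)) as [v Ev].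
    { rewrite (comp_assoc _ _ _ _ _ e), Ef, <- comp_assoc, (comp_assoc _ _ _ _ _ f), <- Er1,
        <- comp_assoc, <- (proj1 (Hpb n)), (comp_assoc _ _ _ _ _ (Fmor H h)), <- Fmor_comp, Eh.
      reflexivity. }
    apply (remainder_disjoint_level (S n) (T n) (p1 ∘ p n) v). symmetry. exact Ev. }
  destruct (inr_split_of_initial_inl C _ _ _ _ _ HbR HR1) as [v Ev].
  exists (rho2 ∘ v).
  rewrite (comp_assoc _ _ _ _ _ (Fmor H xi)), Er2, <- comp_assoc, Ev, comp_id_r.
  exact Ef.
Qed.

Variable u : Hom Xi (H Xi).
Hypothesis Eu : e ∘ xi = in1 ∘ (Fmor H xi ∘ u).

Lemma solution_step_remainder (s : Hom X A) (k : Hom HXA A) :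
  k ∘ in1 = a ∘ Fmor H s -> (k ∘ e) ∘ xi = a ∘ (Fmor H (s ∘ xi) ∘ u).
Proof.
  intros Ek. rewrite <- comp_assoc, Eu, comp_assoc, Ek, <- comp_assoc,
    (comp_assoc _ _ _ _ _ (Fmor H s)), <- Fmor_comp.
  reflexivity.
Qed.

Lemma cia_solution_unique_exists : corecursive H a ->
  exists! s : Hom X A, exists k : Hom HXA A,
    k ∘ in1 = a ∘ Fmor H s /\ k ∘ in2 = idm A /\ s = k ∘ e.
Proof.
  intros Hcor.
  destruct (Hcor Xi u) as [sinf [Esinf Uinf]].
  destruct (Hsig A level_solution) as [sW [EsW _]].
  destruct (HbXi A sW sinf) as [s [[Es1 Es2] _]].
  destruct (Hbin A (a ∘ Fmor H s) (idm A)) as [k [[Ek1 Ek2] _]].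
  assert (Es : forall n, s ∘ sub_inj (level n) = level_solution n).
  { intros n. rewrite <- Eh, comp_assoc, Es1. apply EsW. }
  exists s. split.
  - exists k. split; [exact Ek1|]. split; [exact Ek2|].
    apply (bincoproduct_hom_ext C _ _ _ _ _ HbXi).
    + apply (coproduct_hom_ext C _ _ _ Hsig). intros n.
      rewrite <- !comp_assoc, !Eh, Es, comp_assoc. destruct n as [|n].
      * symmetry. exact (solution_step_level0 k Ek2).
      * symmetry. exact (solution_step_level_succ k s n Ek1 (Es n)).
    + rewrite (solution_step_remainder s k Ek1), Es2. exact Esinf.
  - intros s' [k' [Ek1' [Ek2' Es']]].
    apply (bincoproduct_hom_ext C _ _ _ _ _ HbXi).
    + apply (coproduct_hom_ext C _ _ _ Hsig). intros n.
      rewrite <- !comp_assoc, !Eh, Es.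
      symmetry. exact (cia_solution_on_levels s' k' Ek1' Ek2' Es' n).
    + rewrite Es2. apply Uinf. rewrite Es' at 1. exact (solution_step_remainder s' k' Ek1').
Qed.

End Remainder.

Lemma levels_coproduct_injection SW (sig : forall n, Hom (sub (level n)) SW) h :
  is_coproduct C (fun n => sub (level n)) SW sig ->
  (forall n, h ∘ sig n = sub_inj (level n)) -> coproduct_injection C h.
Proof.
  intros Hsig Eh.
  apply (HK nat countable_nat (fun n => sub (level n)) X (fun n => sub_inj (level n)))
    with (S := SW) (sigma := sig); [| |exact Hsig|exact Eh].
  - intros n. exists (compl (level n)), (compl_inj (level n)).
    exact (sub_bincoproduct (level n)).
  - intros i j Hij.
    destruct (proj1 (HU bool countable_bool _ _ _
                (bincoproduct_bool_coproduct C _ _ _ _ _ (sub_bincoproduct (level i)))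
                _ (sub_inj (level j))) true) as [P [r [q Hpb]]].
    exists P, r, q. split; [exact Hpb|].
    exact (levels_disjoint i j Hij P r q (proj1 Hpb)).
Qed.

Lemma cia_solution_of_split : corecursive H a ->
  exists! s : Hom X A, exists k : Hom HXA A,
    k ∘ in1 = a ∘ Fmor H s /\ k ∘ in2 = idm A /\ s = k ∘ e.
Proof.
  destruct (HCC nat countable_nat (fun n => sub (level n))) as [SW [sig Hsig]].
  destruct (Hsig X (fun n => sub_inj (level n))) as [h [Eh _]].
  destruct (levels_coproduct_injection SW sig h Hsig Eh) as [Xi [xi HbXi]].
  destruct (remainder_coalgebra SW sig Hsig h Xi xi Eh HbXi) as [u Eu].
  exact (cia_solution_unique_exists SW sig Hsig h Xi xi Eh HbXi u Eu).
Qed.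

End CiaOfCorecursive.

Lemma cia_functor_of_hyper_extensive (C : Category) (H : Functor C) :
  hyper_extensive C -> preserves_countable_coproducts C H -> cia_functor C H.
Proof.
  intros [HCC [HU [HD HK]]] HP A a Hcor X HXA in1 in2 Hbin e.
  destruct (bincoproduct_pullback C HU _ _ _ _ _ Hbin X e)
    as [XH [W0 [fH [e0 [xH [w0 [pbH [pb0 binX]]]]]]]].
  exact (cia_solution_of_split C H HCC HU HD HK HP A a X HXA in1 in2 Hbin e
           XH W0 fH e0 xH w0 pbH pb0 binX Hcor).
Qed.

Lemma corecursive_of_cia (C : Category) (H : Functor C) :
  has_countable_coproducts C -> forall (A : C) (a : Hom (H A) A), cia H a -> corecursive H a.
Proof.
  intros HCC A a Hcia X e.
  destruct (bincoproduct_exists C HCC (H X) A) as [HXA [in1 [in2 Hbin]]].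
  destruct (Hcia X HXA in1 in2 Hbin (comp in1 e)) as [s [[k [Ek1 [Ek2 Es]]] Hu]].
  exists s. split.
  - rewrite Es at 1. rewrite comp_assoc, Ek1, <- comp_assoc. reflexivity.
  - intros s' Es'. apply Hu.
    destruct (Hbin A (comp a (Fmor H s')) (idm A)) as [k' [[E1 E2] _]].
    exists k'. split; [exact E1|]. split; [exact E2|].
    rewrite comp_assoc, E1, <- comp_assoc. exact Es'.
Qed.

Theorem mainTheorem4 (C : Category) (H : Functor C) :
  hyper_extensive C ->
  preserves_countable_coproducts C H ->
  has_terminal_coalgebra C H ->
  cia_functor C H /\
  (forall (A : C) (a : Hom (H A) A), corecursive H a <-> cia H a).
Proof.
  intros Hext HP _.
  assert (Hcia : cia_functor C H) by exact (cia_functor_of_hyper_extensive C H Hext HP).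
  split; [exact Hcia|].
  intros A a. split; [apply Hcia|].
  exact (corecursive_of_cia C H (proj1 Hext) A a).
Qed.
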